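(* Let $n\ge3$ and $\ell\in\{1,\dots,n-2\}$. Then $$\Gamma_{\{\ell+1,\ell+2\}}^2+\Gamma_{[\ell+2]\setminus\{\ell+1\}}^2=\Gamma_{[\ell+2]}^2-\Gamma_{[\ell+1]}^2+\Gamma_{[\ell]}^2+\Gamma_{\{\ell+2\}}^2+\Gamma_{\{\ell+1\}}^2-\tfrac14 .$$
   Context: Fix $n\ge1$ and real parameters $\mu_1,\dots,\mu_n>0$; write $[\ell]=\{1,\dots,\ell\}$. For $i\in[n]$, $r_i$ is the reflection $(r_if)(x)=f(x_1,\dots,-x_i,\dots,x_n)$ and $T_i=\partial_{x_i}+\frac{\mu_i}{x_i}(1-r_i)$. $\mathcal{C}\ell_n$ is generated by $e_1,\dots,e_n$ with $e_ie_j+e_je_i=-2\delta_{ij}$, $V$ is a fixed left $\mathcal{C}\ell_n$-module, and operators act on $\mathcal{P}(\mathbb{R}^n)\otimes V$ with $x_i,T_i,r_i$ acting on the polynomial factor and $e_i$ on $V$. For $A\subseteq[n]$: $\underline{D}_A=\sum_{i\in A}e_iT_i$, $\underline{x}_A=\sum_{i\in A}e_ix_i$, $\underline{S}_A=\frac12([\underline{x}_A,\underline{D}_A]-1)$, $\Gamma_A=\underline{S}_A\prod_{i\in A}r_i$ (empty sums $0$, empty products $1$); note $\Gamma_{\{k\}}=\mu_k$. *)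

From HB Require Import structures.
From mathcomp Require Import all_boot all_order all_algebra.
Set Implicit Arguments. Unset Strict Implicit. Unset Printing Implicit Defensive.
Import Order.TTheory GRing.Theory Num.Theory.
Local Open Scope ring_scope.

(* Elements of P(R^n) (x) V are represented by their coefficient maps:
   f = sum_alpha F(alpha) x^alpha, with F : mono n -> V (finitely supported).
   Indices i : 'I_n are 0-based: 'I_n index i stands for the paper's i+1. *)
Definition mono (n : nat) := 'I_n -> nat.
Definition elt (n : nat) (V : Type) := mono n -> V.

Section Ops.
Variables (R : realFieldType) (n : nat) (V : lmodType R).

Definition upd (a : mono n) (i : 'I_n) (g : nat -> nat) : mono n :=
  fun k => if k == i then g (a k) else a k.

Definition finsupp (F : elt n V) : Prop :=
  exists N : nat, forall a : mono n, (exists i, (N < a i)%N) -> F a = 0.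

Definition mulx (i : 'I_n) (F : elt n V) : elt n V :=
  fun a => if (0 < a i)%N then F (upd a i predn) else 0.
Definition refl (i : 'I_n) (F : elt n V) : elt n V :=
  fun a => ((-1) ^+ (a i)) *: F a.
Definition deriv (i : 'I_n) (F : elt n V) : elt n V :=
  fun a => ((a i).+1)%:R *: F (upd a i S).
(* division by x_i (exact on polynomials with no x_i-free monomials,
   which is the case for (1 - r_i) f) *)
Definition divx (i : 'I_n) (F : elt n V) : elt n V :=
  fun a => F (upd a i S).
Definition Dunkl (mu : 'I_n -> R) (i : 'I_n) (F : elt n V) : elt n V :=
  fun a => deriv i F a + mu i *: divx i (fun b => F b - refl i F b) a.

Definition cl (e : 'I_n -> {linear V -> V}) (i : 'I_n) (F : elt n V) : elt n V :=
  fun a => e i (F a).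

Definition DopA (mu : 'I_n -> R) (e : 'I_n -> {linear V -> V}) (A : {set 'I_n})
  (F : elt n V) : elt n V :=
  fun a => \sum_(i in A) cl e i (Dunkl mu i F) a.
Definition XopA (e : 'I_n -> {linear V -> V}) (A : {set 'I_n})
  (F : elt n V) : elt n V :=
  fun a => \sum_(i in A) cl e i (mulx i F) a.
Definition SopA (mu : 'I_n -> R) (e : 'I_n -> {linear V -> V}) (A : {set 'I_n})
  (F : elt n V) : elt n V :=
  fun a => 2^-1 *: (XopA e A (DopA mu e A F) a - DopA mu e A (XopA e A F) a - F a).
Definition reflA (A : {set 'I_n}) (F : elt n V) : elt n V :=
  foldr (fun i G => refl i G) F (enum A).
Definition Gam (mu : 'I_n -> R) (e : 'I_n -> {linear V -> V}) (A : {set 'I_n})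
  (F : elt n V) : elt n V := SopA mu e A (reflA A F).
Definition Gam2 mu e A F := Gam mu e A (Gam mu e A F).

(* 1-based index sets: [m] = {1..m} corresponds to 0-based {k | k < m} *)
Definition setup (m : nat) : {set 'I_n} := [set k : 'I_n | (k < m)%N].
(* the paper's singleton {j} (1-based) *)
Definition sing1 (j : nat) : {set 'I_n} := [set k : 'I_n | (k : nat) == j.-1].

Definition clifford_rel (e : 'I_n -> {linear V -> V}) : Prop :=
  forall (i j : 'I_n) (v : V),
    e i (e j v) + e j (e i v) = - ((if i == j then 2 else 0) *: v).
End Ops.

(* Let omega_ij := e_i e_j (x_i T_j - T_i x_j) and Omega A := sum_(i, j in A) omega_ij, which is
   the commutator [x_A, D_A], so that S_A = (Omega A - 1) / 2.  The product of the r_i, i in A,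
   anticommutes with x_A and D_A, hence commutes with S_A, and squares to 1; thus
   Gamma_A^2 = (Omega A - 1)^2 / 4.  With P = [l], a = l+1 and b = l+2, Omega of each of the
   seven index sets is Omega P plus some of the blocks sum_(i in P) h_ia, sum_(i in P) h_ib,
   h_ab, omega_aa, omega_bb, where h_ij = omega_ij + omega_ji.  Expanding the squares, the
   identity reduces to the vanishing of a sum of anticommutators of these blocks.  Summed over
   the indices of P, its terms cancel by two relations among the h's: one for four distinct
   indices, which is a Pluecker relation for the angular momenta L_ij = x_i T_j - x_j T_i, and
   one for three distinct indices, which comes from [L_pq, L_ps] = -[T_p, x_p] L_qs.  Only the
   commutation relations between the x_i, T_i, r_i and e_i enter, so the argument is carried
   out in an abstract ring and then applied to the linear endomorphisms of P(R^n) (x) V. *)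

From Pilot Require Import Defs.
From HB Require Import structures.
From mathcomp Require Import all_boot all_order all_algebra.
From mathcomp Require Import boolp functions zify.
Set Implicit Arguments. Unset Strict Implicit. Unset Printing Implicit Defensive.
Import GRing.Theory Num.Theory.
Local Open Scope ring_scope.

Section AbelianGroupTerms.
Variable M : zmodType.

Inductive zterm :=
  | ZAtom of nat
  | ZZero
  | ZAdd of zterm & zterm
  | ZOpp of zterm
  | ZMuln of zterm & nat.

Fixpoint zeval (s : seq M) (u : zterm) : M :=
  match u with
  | ZAtom k => s`_k
  | ZZero => 0
  | ZAdd u v => zeval s u + zeval s v
  | ZOpp u => - zeval s u
  | ZMuln u m => zeval s u *+ m
  end.

(* Normal form: the list of integer coefficients of the atoms s`_0, s`_1, ... *)
Fixpoint coef_add (c d : seq int) : seq int :=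
  match c, d with
  | a :: c', b :: d' => (a + b) :: coef_add c' d'
  | [::], _ => d
  | _, [::] => c
  end.

Fixpoint coefs (u : zterm) : seq int :=
  match u with
  | ZAtom k => rcons (nseq k 0) 1
  | ZZero => [::]
  | ZAdd u v => coef_add (coefs u) (coefs v)
  | ZOpp u => map ( *%R (-1)) (coefs u)
  | ZMuln u m => map ( *%R m%:Z) (coefs u)
  end.

Fixpoint coef_eval (s : seq M) (c : seq int) : M :=
  if c is a :: c' then s`_0 *~ a + coef_eval (behead s) c' else 0.

Lemma coef_eval_add s c d :
  coef_eval s (coef_add c d) = coef_eval s c + coef_eval s d.
Proof.
elim: c d s => [|a c IHc] [|b d] s /=; rewrite ?addr0 ?add0r //.
by rewrite IHc mulrzDr addrACA.
Qed.

Lemma coef_eval_scale s z c : coef_eval s (map ( *%R z) c) = coef_eval s c *~ z.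
Proof.
elim: c s => [|a c IHc] s /=; first by rewrite mul0rz.
by rewrite IHc mulrzDl mulrC mulrzA.
Qed.

Lemma coef_eval_atom s k : coef_eval s (rcons (nseq k 0) 1) = s`_k.
Proof.
elim: k s => [|k IHk] [|x s] /=; rewrite ?mul0rz ?mulr1z ?addr0 ?add0r //.
by rewrite IHk nth_nil.
Qed.

Lemma zeval_coefs s u : zeval s u = coef_eval s (coefs u).
Proof.
elim: u => [k||u IHu v IHv|u IHu|u IHu m] /=.
- by rewrite coef_eval_atom.
- by [].
- by rewrite coef_eval_add IHu IHv.
- by rewrite coef_eval_scale IHu mulrN1z.
- by rewrite coef_eval_scale IHu -pmulrn.
Qed.

Lemma zeval_eq s u v :
  all (pred1 0) (coefs (ZAdd u (ZOpp v))) -> zeval s u = zeval s v.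
Proof.
move=> c0; apply/eqP; rewrite -subr_eq0.
have -> : zeval s u - zeval s v = zeval s (ZAdd u (ZOpp v)) by [].
rewrite zeval_coefs; elim: (coefs _) s c0 => [|a c IHc] s //= /andP[/eqP -> c0].
by rewrite mulr0z add0r IHc.
Qed.
End AbelianGroupTerms.

(* Atoms are compared up to conversion: the same sum may carry different
   (convertible) instance paths for its operations. *)
Ltac zmem x s :=
  match s with
  | ?y :: _ => constr:(ltac:(unify x y; exact true))
  | _ :: ?s' => zmem x s'
  | _ => constr:(false)
  end.

Ltac zindex x s :=
  match s with
  | ?y :: _ => constr:(ltac:(unify x y; exact 0%N))
  | _ :: ?s' => let k := zindex x s' in constr:(k.+1)
  end.

Ltac zatoms u s :=
  lazymatch u with
  | ?v + ?w => let s' := zatoms v s in zatoms w s'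
  | - ?v => zatoms v s
  | 0 => s
  | ?v *+ _ => zatoms v s
  | _ => lazymatch zmem u s with true => s | false => constr:(u :: s) end
  end.

Ltac zreify u s :=
  lazymatch u with
  | ?v + ?w => let rv := zreify v s in let rw := zreify w s in constr:(ZAdd rv rw)
  | - ?v => let rv := zreify v s in constr:(ZOpp rv)
  | 0 => constr:(ZZero)
  | ?v *+ ?m => let rv := zreify v s in constr:(ZMuln rv m)
  | _ => let k := zindex u s in constr:(ZAtom k)
  end.

(* Proves identities in an abelian group by reflection, treating every
   maximal subterm that is not built from [+], [-], [0], [*+] as an atom. *)
Ltac abel :=
  lazymatch goal with
  | |- @eq ?M ?u ?v =>
    let s := zatoms u (@nil M) in
    let s := zatoms v s in
    let ru := zreify u s in
    let rv := zreify v s in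
    change (zeval s ru = zeval s rv); apply: zeval_eq; vm_compute; reflexivity
  end.

Lemma eq_of_subr_eq (M : zmodType) (a b c d : M) : c = d -> a - b = c - d -> a = b.
Proof. by move=> -> /eqP; rewrite subrr subr_eq0 => /eqP. Qed.

Lemma double_sum_offdiag_cancel (I : finType) (M : zmodType) (P : {pred I})
    (u : I -> I -> M) :
  (forall i j, i \in P -> j \in P -> i != j -> u i j + u j i = 0) ->
  \sum_(i in P) \sum_(j in P) u i j = \sum_(i in P) u i i.
Proof.
move=> u_anti; set rk := @enum_rank I.
have split_row i : i \in P -> \sum_(j in P) u i j =
    u i i + \sum_(j in P | (rk i < rk j)%N) u i j
          + \sum_(j in P | (rk j < rk i)%N) u i j.
  move=> Pi; rewrite (bigD1 i) //= (bigID (fun j => (rk i < rk j)%N)) /= addrA.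
  congr (_ + _ + _); apply: eq_bigl => j; rewrite -andbA; case: (j \in P) => //=.
  - by apply: andb_idl; apply: contraTneq => ->; rewrite ltnn.
  - by rewrite -leqNgt -(inj_eq enum_rank_inj) -ltn_neqAle.
rewrite (eq_bigr _ split_row) !big_split /=.
rewrite [X in _ + X](exchange_big_dep (mem P)) /=; last by move=> i j _ /andP[].
rewrite -addrA -big_split /= [X in _ + X]big1 ?addr0 // => i Pi.
rewrite Pi -big_split; apply: big1 => j /andP[Pj ij]; apply: u_anti => //.
by apply: contraTneq ij => ->; rewrite ltnn.
Qed.

Definition acomm (K : pzRingType) (a b : K) := a * b + b * a.

Lemma acommC (K : pzRingType) (a b : K) : acomm a b = acomm b a.
Proof. by rewrite /acomm addrC. Qed.

Lemma acommDl (K : pzRingType) (a b c : K) : acomm (a + b) c = acomm a c + acomm b c.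
Proof. by rewrite /acomm mulrDl mulrDr addrACA. Qed.

Lemma acomm_suml (K : pzRingType) (I : Type) (s : seq I) (P : pred I) (f : I -> K) c :
  acomm (\sum_(i <- s | P i) f i) c = \sum_(i <- s | P i) acomm (f i) c.
Proof. by rewrite /acomm mulr_suml mulr_sumr -big_split. Qed.

Lemma acomm_sumr (K : pzRingType) (I : Type) (s : seq I) (P : pred I) (f : I -> K) c :
  acomm c (\sum_(i <- s | P i) f i) = \sum_(i <- s | P i) acomm c (f i).
Proof. by rewrite acommC acomm_suml; apply: eq_bigr => i _; apply: acommC. Qed.

Lemma acommMn (K : pzRingType) (a b : K) m : acomm a (b *+ m) = acomm a b *+ m.
Proof. by rewrite /acomm mulrnAl mulrnAr mulrnDl. Qed.

Lemma acommnM (K : pzRingType) (a b : K) m : acomm (a *+ m) b = acomm a b *+ m.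
Proof. by rewrite acommC acommMn acommC. Qed.

(* Expanding the squares leaves exactly the anticommutators of the hypothesis. *)
Lemma sqr_sum_identity (K : pzRingType) (U A B p q y : K) :
  acomm U y + acomm A B + acomm A q + acomm A y + acomm B p + acomm B y = 0 ->
  (q + y + p - 1) ^+ 2 + (U + B + q - 1) ^+ 2
  = (U + A + p + (y + B) + q - 1) ^+ 2 - (U + A + p - 1) ^+ 2 + (U - 1) ^+ 2
    + (q - 1) ^+ 2 + (p - 1) ^+ 2 - 1.
Proof.
move=> cross0; rewrite -[RHS]subr0 -cross0 /acomm !expr2.
rewrite !(mulrDl, mulrDr, mulrBl, mulrBr, mul1r, mulr1).
abel.
Qed.

(** * The algebra generated by Dunkl operators, reflections and Clifford units *)

Section DunklCliffordAlgebra.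
Variables (I : finType) (K : pzRingType) (x t e : I -> K).
Hypothesis x_comm : forall i j, GRing.comm (x i) (x j).
Hypothesis t_comm : forall i j, GRing.comm (t i) (t j).
Hypothesis xt_comm : forall i j, i != j -> GRing.comm (x i) (t j).
Hypothesis ex_comm : forall i j, GRing.comm (e i) (x j).
Hypothesis et_comm : forall i j, GRing.comm (e i) (t j).
Hypothesis e_anti : forall i j, i != j -> e i * e j = - (e j * e i).
Hypothesis e_sqr : forall i, e i * e i = -1.
Implicit Types A P : {set I}.

(* [ee] and [ncomm] are locked so that ring rewrites such as [mulrA] or
   [mulrBl] treat them as atoms. *)
Fact ee_key : unit. Proof. by []. Qed.
Definition ee i j := locked_with ee_key (e i * e j).
Lemma eeE i j : ee i j = e i * e j. Proof. by rewrite /ee unlock. Qed.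

Fact ncomm_key : unit. Proof. by []. Qed.
Definition ncomm i := locked_with ncomm_key (t i * x i - x i * t i).
Lemma ncommE i : ncomm i = t i * x i - x i * t i. Proof. by rewrite /ncomm unlock. Qed.
Definition lmom i j := x i * t j - x j * t i.
Definition omega i j := ee i j * (x i * t j - t i * x j).
Definition omega_sym i j := omega i j + omega j i.
Definition Omega A := \sum_(i in A) \sum_(j in A) omega i j.

Lemma ee_anti i j : i != j -> ee j i = - ee i j.
Proof. by move=> ij; rewrite !eeE e_anti ?opprK // eq_sym. Qed.

Lemma ee_diag i : ee i i = -1.
Proof. by rewrite eeE e_sqr. Qed.

Lemma eeM_mid p q s : ee p q * ee q s = - ee p s.
Proof. by rewrite !eeE mulrA -(mulrA (e p)) e_sqr mulrN1 mulNr. Qed.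

Lemma eeM_first p q s : p != q -> ee p q * ee p s = ee q s.
Proof.
move=> pq; rewrite !eeE mulrA -(mulrA (e p)) e_anti 1?eq_sym //.
by rewrite mulrN mulNr mulrA e_sqr mulN1r mulNr opprK.
Qed.

Lemma eeM_last p q s : q != s -> ee p s * ee q s = ee p q.
Proof.
move=> qs; rewrite !eeE mulrA -(mulrA (e p)) e_anti 1?eq_sym //.
by rewrite mulrN mulNr -!mulrA e_sqr mulrN1 mulrN opprK.
Qed.

Lemma eeM_cycle p q s : p != q -> q != s -> s != p -> ee q s * ee p q = ee p s.
Proof.
move=> pq qs sp; rewrite !eeE -!mulrA (e_anti pq) !(mulrN, mulNr).
rewrite (mulrA (e s)) e_anti 1?eq_sym // !(mulrN, mulNr) !mulrA e_sqr mulN1r.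
by rewrite opprK mulNr e_anti // opprK.
Qed.

Lemma eeM_swap p q r s : q != r -> ee p q * ee r s = - (ee p r * ee q s).
Proof. by move=> qr; rewrite !eeE !mulrA -(mulrA (e p)) e_anti // mulrN mulNr !mulrA. Qed.

Lemma ee_comm_disjoint p q r s : p != r -> p != s -> q != r -> q != s ->
  GRing.comm (ee p q) (ee r s).
Proof.
have e_rs u : u != r -> u != s -> GRing.comm (e u) (ee r s).
  move=> ur us; rewrite /GRing.comm !eeE mulrA e_anti // mulNr -mulrA.
  by rewrite e_anti // mulrN opprK mulrA.
move=> pr ps qr qs; rewrite [ee p q]eeE.
by apply: commr_sym; apply: commrM; apply: commr_sym; apply: e_rs.
Qed.

Definition ecentral f := forall k, GRing.comm (e k) f.

Lemma ecentral_lmom i j : ecentral (lmom i j).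
Proof. by move=> k; apply: commrB; apply: commrM. Qed.

Lemma ecentral_ncomm i : ecentral (ncomm i).
Proof. by move=> k; rewrite ncommE; apply: commrB; apply: commrM. Qed.

Lemma ee_comm_ecentral f i j : ecentral f -> GRing.comm (ee i j) f.
Proof. by move=> f_c; rewrite eeE; apply: commr_sym; apply: commrM; apply: commr_sym. Qed.

Lemma acomm_eeM p q r s f g : ecentral f -> ecentral g ->
  acomm (ee p q * f) (ee r s * g) = ee p q * ee r s * (f * g) + ee r s * ee p q * (g * f).
Proof.
move=> f_c g_c; rewrite /acomm !mulrA -(mulrA (ee p q) f) -(ee_comm_ecentral r s f_c).
by rewrite -(mulrA (ee r s) g) -(ee_comm_ecentral p q g_c) !mulrA.
Qed.

Lemma acomm_ncomm_eeM k r s f : ecentral f -> GRing.comm (ncomm k) f ->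
  acomm (ncomm k) (ee r s * f) = (ee r s * (ncomm k * f)) *+ 2.
Proof.
move=> f_c nf; rewrite /acomm mulrA -(ee_comm_ecentral r s (ecentral_ncomm k)).
by rewrite -!mulrA -nf mulr2n.
Qed.

Lemma omega_diag i : omega i i = ncomm i.
Proof. by rewrite /omega ee_diag mulN1r opprB ncommE. Qed.

Lemma omega_symC i j : omega_sym i j = omega_sym j i.
Proof. exact: addrC. Qed.

Lemma omega_sym_offdiag i j : i != j -> omega_sym i j = (ee i j * lmom i j) *+ 2.
Proof.
move=> ij; have ji : j != i by rewrite eq_sym.
rewrite /omega_sym /omega ee_anti // -(xt_comm ij) -(xt_comm ji) /lmom.
by rewrite mulNr -mulrN opprB mulr2n.
Qed.

Lemma lmom_anti p q : lmom q p = - lmom p q.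
Proof. by rewrite /lmom opprB. Qed.

Lemma mul_tx_swap y q s : q != s -> y * t q * x s = y * x s * t q.
Proof. by move=> qs; rewrite -!mulrA xt_comm // eq_sym. Qed.

Lemma mul_tx_diag y p : y * t p * x p = y * x p * t p + y * ncomm p.
Proof. by rewrite ncommE -!mulrA -mulrDr addrC subrK. Qed.

Lemma mul_tt_swap y i j : y * t i * t j = y * t j * t i.
Proof. by rewrite -!mulrA t_comm. Qed.

Lemma x_ncomm_comm q p : q != p -> GRing.comm (x q) (ncomm p).
Proof. by move=> qp; rewrite ncommE; apply: commrB; apply: commrM => //; apply: xt_comm. Qed.

Lemma x_lmom_comm p r s : p != r -> p != s -> GRing.comm (x p) (lmom r s).
Proof. by move=> pr ps; apply: commrB; apply: commrM => //; apply: xt_comm. Qed.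

Lemma t_lmom_comm q r s : q != r -> q != s -> GRing.comm (t q) (lmom r s).
Proof.
move=> qr qs; apply: commrB; apply: commrM => //; apply: commr_sym; apply: xt_comm;
  by rewrite eq_sym.
Qed.

Lemma lmom_comm_disjoint p q r s : p != r -> p != s -> q != r -> q != s ->
  GRing.comm (lmom p q) (lmom r s).
Proof.
move=> pr ps qr qs; apply: commr_sym; apply: commrB; apply: commrM; apply: commr_sym;
  by [apply: x_lmom_comm | apply: t_lmom_comm].
Qed.

Lemma ncomm_lmom_comm k r s : k != r -> k != s -> GRing.comm (ncomm k) (lmom r s).
Proof.
move=> kr ks; rewrite ncommE; apply: commr_sym; apply: commrB; apply: commrM; apply: commr_sym;
  by [apply: x_lmom_comm | apply: t_lmom_comm].
Qed.

Lemma lmom_plucker i j a b : i != j -> i != a -> i != b -> j != a -> j != b -> a != b ->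
  lmom i j * lmom a b = lmom i a * lmom j b - lmom j a * lmom i b.
Proof.
move=> ij ia ib ja jb ab.
have ji : j != i by rewrite eq_sym. have ai : a != i by rewrite eq_sym.
have bi : b != i by rewrite eq_sym. have aj : a != j by rewrite eq_sym.
have bj : b != j by rewrite eq_sym. have ba : b != a by rewrite eq_sym.
rewrite /lmom !mulrBl !mulrBr !mulrA !mul_tx_swap //.
rewrite (x_comm a i) (x_comm a j) (x_comm j i).
rewrite !(mul_tt_swap _ a j) !(mul_tt_swap _ a i) !(mul_tt_swap _ j i).
abel.
Qed.

Lemma lmom_commutator p q s : p != q -> q != s -> s != p ->
  lmom p q * lmom p s = lmom p s * lmom p q - ncomm p * lmom q s.
Proof.
move=> pq qs sp; have qp : q != p by rewrite eq_sym.
have sq : s != q by rewrite eq_sym. have ps : p != s by rewrite eq_sym.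
rewrite /lmom !mulrBl !mulrBr !mulrA !(mul_tx_diag _ p) !mulrDl.
rewrite !mul_tx_swap // (x_ncomm_comm qp) (x_ncomm_comm sp).
rewrite (x_comm s p) (x_comm q p) (x_comm s q).
rewrite !(mul_tt_swap _ s q) !(mul_tt_swap _ q p) !(mul_tt_swap _ s p).
abel.
Qed.

Lemma acomm_omega_sym4 i j a b :
  i != j -> i != a -> i != b -> j != a -> j != b -> a != b ->
  acomm (omega_sym i j) (omega_sym a b) + acomm (omega_sym i a) (omega_sym j b)
  + acomm (omega_sym j a) (omega_sym i b) = 0.
Proof.
move=> ij ia ib ja jb ab.
have ji : j != i by rewrite eq_sym. have ai : a != i by rewrite eq_sym.
have aj : a != j by rewrite eq_sym.
rewrite !omega_sym_offdiag // !acommMn !acommnM !acomm_eeM //; try exact: ecentral_lmom.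
rewrite -(ee_comm_disjoint ia ib ja jb) -(ee_comm_disjoint ij ib aj ab).
rewrite -(ee_comm_disjoint ji jb ai ab).
rewrite -(lmom_comm_disjoint ia ib ja jb) -(lmom_comm_disjoint ij ib aj ab).
rewrite -(lmom_comm_disjoint ji jb ai ab).
rewrite (eeM_swap _ _ aj) (eeM_swap _ _ ai) (ee_anti ij) !mulNr opprK.
rewrite (lmom_plucker ij ia ib ja jb ab) !mulrBr.
abel.
Qed.

Lemma acomm_omega_sym3 i a b : i != a -> a != b -> b != i ->
  acomm (omega i i) (omega_sym a b) + acomm (omega_sym i a) (omega_sym i b)
  + acomm (omega_sym i a) (omega b b) + acomm (omega_sym i a) (omega_sym a b)
  + acomm (omega_sym i b) (omega a a) + acomm (omega_sym i b) (omega_sym a b) = 0.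
Proof.
move=> ia ab bi.
have ai : a != i by rewrite eq_sym. have ib : i != b by rewrite eq_sym.
have ba : b != a by rewrite eq_sym.
have comm_ab_ia : lmom a b * lmom i a = lmom i a * lmom a b - ncomm a * lmom i b.
  apply: (eq_of_subr_eq (lmom_commutator ai ib ba)).
  by rewrite !(lmom_anti i a) mulrN mulNr; abel.
have comm_ib_ab : lmom i b * lmom a b = lmom a b * lmom i b - ncomm b * lmom i a.
  apply: (eq_of_subr_eq (lmom_commutator bi ia ab)).
  by rewrite !(lmom_anti i b) !(lmom_anti a b) !(mulrN, mulNr, opprK); abel.
rewrite !omega_diag !omega_sym_offdiag // (acommC _ (ncomm b)) (acommC _ (ncomm a)).
rewrite !acommMn !acommnM !acomm_ncomm_eeM; try exact: ecentral_lmom;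
  try (apply: ncomm_lmom_comm; by rewrite // eq_sym).
rewrite !acomm_eeM; try exact: ecentral_lmom.
rewrite (eeM_first _ ia) (eeM_first _ ib) (ee_anti ab) (eeM_mid i a b) (eeM_cycle ia ab bi).
rewrite (eeM_last _ ab) (eeM_last _ ib) (ee_anti ia).
rewrite (lmom_commutator ia ab bi) comm_ab_ia comm_ib_ab.
rewrite !(mulrBr, mulNr, mulrN).
abel.
Qed.

Lemma Omega_set1 k : Omega [set k] = omega k k.
Proof. by rewrite /Omega !big_set1. Qed.

Lemma Omega_setU1 k A : k \notin A ->
  Omega (k |: A) = Omega A + \sum_(i in A) omega_sym i k + omega k k.
Proof.
move=> kA; rewrite /Omega.
under eq_bigr => i _ do rewrite (big_setU1 _ kA).
rewrite (big_setU1 _ kA) /= big_split /= /omega_sym big_split /=.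
abel.
Qed.

Lemma Omega_cross_terms P a b : a != b -> a \notin P -> b \notin P ->
  acomm (Omega P) (omega_sym a b)
  + acomm (\sum_(i in P) omega_sym i a) (\sum_(i in P) omega_sym i b)
  + acomm (\sum_(i in P) omega_sym i a) (omega b b)
  + acomm (\sum_(i in P) omega_sym i a) (omega_sym a b)
  + acomm (\sum_(i in P) omega_sym i b) (omega a a)
  + acomm (\sum_(i in P) omega_sym i b) (omega_sym a b) = 0.
Proof.
move=> ab aP bP.
have outside i : i \in P -> (i != a) && (i != b).
  by move=> Pi; apply/andP; split; apply: contraTneq Pi => ->.
rewrite /Omega !acomm_suml.
under eq_bigr => i _ do rewrite acomm_suml.
under [X in _ + X + _ + _ + _ + _]eq_bigr => i _ do rewrite acomm_sumr.
rewrite -big_split /=.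
under eq_bigr => i _ do rewrite -big_split /=.
rewrite double_sum_offdiag_cancel; last first.
  move=> i j Pi Pj ij; case/andP: (outside i Pi) => ia ib.
  case/andP: (outside j Pj) => ja jb.
  have omega_symE : omega_sym i j = omega i j + omega j i by [].
  by move: (acomm_omega_sym4 ij ia ib ja jb ab); rewrite omega_symE acommDl => <-; abel.
rewrite -!big_split /=; apply: big1 => i Pi; case/andP: (outside i Pi) => ia ib.
by move: (acomm_omega_sym3 ia ab (ltac:(by rewrite eq_sym) : b != i)) => <-; abel.
Qed.

Lemma Omega_sqr_identity P a b : a != b -> a \notin P -> b \notin P ->
  (Omega [set a; b] - 1) ^+ 2 + (Omega (b |: P) - 1) ^+ 2
  = (Omega (b |: (a |: P)) - 1) ^+ 2 - (Omega (a |: P) - 1) ^+ 2 + (Omega P - 1) ^+ 2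
    + (Omega [set b] - 1) ^+ 2 + (Omega [set a] - 1) ^+ 2 - 1.
Proof.
move=> ab aP bP.
have a_b : a \notin [set b] by rewrite inE.
have b_aP : b \notin a |: P by rewrite !inE negb_or eq_sym ab.
rewrite (Omega_setU1 b_aP) (big_setU1 _ aP) /= (Omega_setU1 aP) (Omega_setU1 bP).
rewrite (Omega_setU1 a_b) big_set1 !Omega_set1 omega_symC.
exact/sqr_sum_identity/Omega_cross_terms.
Qed.

Variable r : I -> K.
Hypothesis rx_anti : forall i, r i * x i = - (x i * r i).
Hypothesis rt_anti : forall i, r i * t i = - (t i * r i).
Hypothesis rx_comm : forall i j, i != j -> GRing.comm (r i) (x j).
Hypothesis rt_comm : forall i j, i != j -> GRing.comm (r i) (t j).
Hypothesis r_comm : forall i j, GRing.comm (r i) (r j).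
Hypothesis r_sqr : forall i, r i * r i = 1.
Hypothesis er_comm : forall i j, GRing.comm (e i) (r j).

Definition xA A := \sum_(i in A) e i * x i.
Definition DA A := \sum_(i in A) e i * t i.
Definition rprod (s : seq I) := \prod_(k <- s) r k.
(* Twice the operator [Gamma_A] of the paper. *)
Definition Gamma2 A := (xA A * DA A - DA A * xA A - 1) * rprod (enum A).

Lemma commutator_xA_DA A : xA A * DA A - DA A * xA A = Omega A.
Proof.
rewrite /xA /DA /Omega !mulr_suml -sumrB; apply: eq_bigr => i _.
rewrite !mulr_sumr -sumrB; apply: eq_bigr => j _.
rewrite /omega eeE mulrBr !mulrA -(mulrA (e i) (x i)) -(mulrA (e i) (t i)).
by rewrite -ex_comm -et_comm !mulrA.
Qed.

Lemma rprod_comm (s : seq I) f : (forall k, k \in s -> GRing.comm (r k) f) ->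
  GRing.comm (rprod s) f.
Proof.
rewrite /rprod; elim: s => [|k s IHs] rf; first by rewrite big_nil; apply/commr_sym/commr1.
rewrite big_cons; apply: commr_sym; apply: commrM; apply: commr_sym.
  by apply: rf; rewrite inE eqxx.
by apply: IHs => k' k's; apply: rf; rewrite inE k's orbT.
Qed.

Lemma rprod_anti (s : seq I) f i : uniq s -> i \in s -> r i * f = - (f * r i) ->
  (forall k, k != i -> GRing.comm (r k) f) -> rprod s * f = - (f * rprod s).
Proof.
elim: s => [//|k s IHs] /= /andP[ks us] i_ks ri_f rk_f.
rewrite /rprod big_cons -/(rprod s).
case/predU1P: i_ks => [ik|i_s].
  subst i; have rs_f : GRing.comm (rprod s) f.
    by apply: rprod_comm => k' k's; apply: rk_f; apply: contraNneq ks => <-.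
  by rewrite -mulrA rs_f mulrA ri_f mulNr -mulrA.
have ki : k != i by apply: contraNneq ks => ->.
by rewrite -mulrA (IHs us i_s) // mulrN (mulrA (r k) f) (rk_f k ki) -mulrA.
Qed.

Lemma rprod_sqr (s : seq I) : rprod s * rprod s = 1.
Proof.
rewrite /rprod; elim: s => [|k s IHs]; first by rewrite big_nil mulr1.
rewrite big_cons -/(rprod s) in IHs *.
have rk_s : GRing.comm (r k) (rprod s).
  by apply: commr_sym; apply: rprod_comm => k' _; apply: r_comm.
by rewrite -mulrA (mulrA (rprod s)) -rk_s -mulrA IHs mulr1 r_sqr.
Qed.

Lemma rprod_e_comm (s : seq I) i : GRing.comm (rprod s) (e i).
Proof. by apply: rprod_comm => k _; apply: commr_sym. Qed.

Lemma rprod_sum_anti A (y : I -> K) :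
  (forall i, r i * y i = - (y i * r i)) -> (forall i j, i != j -> GRing.comm (r i) (y j)) ->
  rprod (enum A) * (\sum_(i in A) e i * y i) = - ((\sum_(i in A) e i * y i) * rprod (enum A)).
Proof.
move=> ry_anti ry_comm; rewrite mulr_sumr mulr_suml -sumrN; apply: eq_bigr => i iA.
rewrite mulrA rprod_e_comm -mulrA (@rprod_anti _ _ i) ?enum_uniq ?mem_enum //.
  by rewrite mulrN !mulrA.
by move=> k ki; apply: ry_comm.
Qed.

Lemma Gamma2_sqr A : Gamma2 A ^+ 2 = (Omega A - 1) ^+ 2.
Proof.
have rA_comm : GRing.comm (rprod (enum A)) (xA A * DA A - DA A * xA A - 1).
  have rx := rprod_sum_anti A rx_anti rx_comm; have rt := rprod_sum_anti A rt_anti rt_comm.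
  rewrite /GRing.comm /xA /DA !mulrBr !mulrBl !mulr1 !mul1r !mulrA rx rt.
  by rewrite !mulNr -!mulrA rx rt !mulrN !opprK.
rewrite /Gamma2 expr2 -mulrA (mulrA (rprod _)) rA_comm -!mulrA rprod_sqr mulr1.
by rewrite commutator_xA_DA expr2.
Qed.

Theorem Gamma2_sqr_identity P a b : a != b -> a \notin P -> b \notin P ->
  Gamma2 [set a; b] ^+ 2 + Gamma2 (b |: P) ^+ 2
  = Gamma2 (b |: (a |: P)) ^+ 2 - Gamma2 (a |: P) ^+ 2 + Gamma2 P ^+ 2
    + Gamma2 [set b] ^+ 2 + Gamma2 [set a] ^+ 2 - 1.
Proof. by move=> ab aP bP; rewrite !Gamma2_sqr; apply: Omega_sqr_identity. Qed.

End DunklCliffordAlgebra.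

(** * Linear operators on P(R^n) (x) V *)

Section LinearEndomorphisms.
Variables (R : pzRingType) (U : lmodType R).

Record endo := Endo { endo_fun :> U -> U; endo_linear : linear endo_fun }.

HB.instance Definition _ (f : endo) :=
  GRing.isLinear.Build R U U *:%R (endo_fun f) (endo_linear f).

Lemma endoP (f g : endo) : f =1 g -> f = g.
Proof.
case: f g => f fL [g gL] /= /funext fg; subst g.
by congr Endo; apply: Prop_irrelevance.
Qed.

Lemma endo_zero_linear : linear (fun _ : U => 0 : U).
Proof. by move=> a u v; rewrite scaler0 addr0. Qed.

Lemma endo_add_linear (f g : endo) : linear (fun u => f u + g u).
Proof. by move=> a u v; rewrite !linearP scalerDr addrACA. Qed.

Lemma endo_opp_linear (f : endo) : linear (fun u => - f u).
Proof. by move=> a u v; rewrite linearP scalerN opprD. Qed.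

Lemma endo_one_linear : linear (@id U).
Proof. by []. Qed.

Lemma endo_mul_linear (f g : endo) : linear (fun u => f (g u)).
Proof. by move=> a u v; rewrite !linearP. Qed.

HB.instance Definition _ := gen_eqMixin endo.
HB.instance Definition _ := gen_choiceMixin endo.

Definition endo_zero := Endo endo_zero_linear.
Definition endo_add f g := Endo (endo_add_linear f g).
Definition endo_opp f := Endo (endo_opp_linear f).
Definition endo_one := Endo endo_one_linear.
Definition endo_mul f g := Endo (endo_mul_linear f g).

Lemma endo_addrA : associative endo_add.
Proof. by move=> f g h; apply: endoP => u /=; rewrite addrA. Qed.
Lemma endo_addrC : commutative endo_add.
Proof. by move=> f g; apply: endoP => u /=; rewrite addrC. Qed.
Lemma endo_add0r : left_id endo_zero endo_add.
Proof. by move=> f; apply: endoP => u /=; rewrite add0r. Qed.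
Lemma endo_addNr : left_inverse endo_zero endo_opp endo_add.
Proof. by move=> f; apply: endoP => u /=; rewrite addNr. Qed.
HB.instance Definition _ :=
  GRing.isZmodule.Build endo endo_addrA endo_addrC endo_add0r endo_addNr.

Lemma endo_mulrA : associative endo_mul. Proof. by move=> f g h; apply: endoP. Qed.
Lemma endo_mul1r : left_id endo_one endo_mul. Proof. by move=> f; apply: endoP. Qed.
Lemma endo_mulr1 : right_id endo_one endo_mul. Proof. by move=> f; apply: endoP. Qed.
Lemma endo_mulrDl : left_distributive endo_mul endo_add.
Proof. by move=> f g h; apply: endoP. Qed.
Lemma endo_mulrDr : right_distributive endo_mul endo_add.
Proof. by move=> f g h; apply: endoP => u /=; rewrite linearD. Qed.
HB.instance Definition _ := GRing.Zmodule_isPzRing.Build endo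
  endo_mulrA endo_mul1r endo_mulr1 endo_mulrDl endo_mulrDr.

Lemma endo_sumE (I : Type) (s : seq I) (P : pred I) (f : I -> endo) u :
  (\sum_(i <- s | P i) f i) u = \sum_(i <- s | P i) f i u.
Proof. by elim/big_rec2: _ => // i g h _ <-. Qed.

End LinearEndomorphisms.

Section DunklOperators.
Variables (R : realFieldType) (n : nat) (V : lmodType R).
Variables (mu : 'I_n -> R) (e : 'I_n -> {linear V -> V}).
Hypothesis e_clifford : clifford_rel e.
Local Notation W := (elt n V).
Implicit Types (F : W) (a : mono n) (i j : 'I_n).

Lemma upd_eq a i g : upd a i g i = g (a i).
Proof. by rewrite /upd eqxx. Qed.

Lemma upd_neq a i j g : j != i -> upd a i g j = a j.
Proof. by rewrite /upd => /negbTE ->. Qed.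

Lemma updC a i j g h : i != j -> upd (upd a i g) j h = upd (upd a j h) i g.
Proof.
move=> ij; apply/funext => k; rewrite /upd.
by case: (eqVneq k j) => [->|//]; rewrite eq_sym (negbTE ij).
Qed.

Definition dunkl_coef i m : R := m.+1%:R + mu i * (1 - (-1) ^+ m.+1).

Lemma DunklE i F a : Dunkl mu i F a = dunkl_coef i (a i) *: F (upd a i S).
Proof.
rewrite /Dunkl /Defs.deriv /divx /refl upd_eq /dunkl_coef.
by rewrite scalerDl -scalerA scalerBl scale1r.
Qed.

Lemma mulx_linear i : linear (@mulx R n V i).
Proof.
move=> k F G; rewrite /mulx !fctE; apply/funext => a /=.
by case: ifP; rewrite ?scaler0 ?addr0.
Qed.

Lemma Dunkl_linear i : linear (@Dunkl R n V mu i).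
Proof.
by move=> k F G; rewrite !fctE; apply/funext => a; rewrite !DunklE scalerDr !scalerA mulrC.
Qed.

Lemma refl_linear i : linear (@refl R n V i).
Proof.
by move=> k F G; rewrite /refl !fctE; apply/funext => a; rewrite scalerDr !scalerA mulrC.
Qed.

Lemma cl_linear i : linear (cl e i).
Proof. by move=> k F G; rewrite /cl !fctE; apply/funext => a; rewrite linearP. Qed.

Definition xop i := Endo (mulx_linear i).
Definition top i := Endo (Dunkl_linear i).
Definition rop i := Endo (refl_linear i).
Definition eop i := Endo (cl_linear i).

Lemma endo_eqP (f g : endo W) : (forall F a, f F a = g F a) -> f = g.
Proof. by move=> fg; apply: endoP => F; apply/funext => a; apply: fg. Qed.

Lemma xop_comm i j : GRing.comm (xop i) (xop j).
Proof.
apply: endo_eqP => F a /=; rewrite /mulx.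
case: (eqVneq i j) => [->//|ij].
rewrite upd_neq 1?eq_sym // upd_neq // updC //.
by case: (0 < a i)%N; case: (0 < a j)%N.
Qed.

Lemma top_comm i j : GRing.comm (top i) (top j).
Proof.
apply: endo_eqP => F a /=; case: (eqVneq i j) => [->//|ij].
by rewrite !DunklE !scalerA upd_neq 1?eq_sym // upd_neq // updC // mulrC.
Qed.

Lemma xop_top_comm i j : i != j -> GRing.comm (xop i) (top j).
Proof.
move=> ij; apply: endo_eqP => F a /=; rewrite /mulx !DunklE upd_neq ?upd_neq // 1?eq_sym //.
by case: ifP; rewrite ?scaler0 // => _; rewrite updC.
Qed.

Lemma rop_xop_anti i : rop i * xop i = - (xop i * rop i).
Proof.
apply: endo_eqP => F a /=; rewrite /mulx /refl opprfctE upd_eq.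
by case: (a i) => [|m] /=; rewrite ?scaler0 ?oppr0 // exprS mulN1r scaleNr.
Qed.

Lemma rop_top_anti i : rop i * top i = - (top i * rop i).
Proof.
apply: endo_eqP => F a /=; rewrite /refl opprfctE !DunklE upd_eq exprS !scalerA.
by rewrite mulN1r mulrN scaleNr opprK mulrC.
Qed.

Lemma rop_xop_comm i j : i != j -> GRing.comm (rop i) (xop j).
Proof.
move=> ij; apply: endo_eqP => F a /=; rewrite /mulx /refl.
by case: ifP; rewrite ?scaler0 // => _; rewrite upd_neq.
Qed.

Lemma rop_top_comm i j : i != j -> GRing.comm (rop i) (top j).
Proof.
move=> ij; have ji : j != i by rewrite eq_sym.
by apply: endo_eqP => F a /=; rewrite /refl !DunklE upd_neq // !scalerA mulrC.
Qed.

Lemma rop_comm i j : GRing.comm (rop i) (rop j).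
Proof. by apply: endo_eqP => F a /=; rewrite /refl !scalerA mulrC. Qed.

Lemma rop_sqr i : rop i * rop i = 1.
Proof. by apply: endo_eqP => F a /=; rewrite /refl scalerA -expr2 sqrr_sign scale1r. Qed.

Lemma eop_xop_comm i j : GRing.comm (eop i) (xop j).
Proof. by apply: endo_eqP => F a /=; rewrite /cl /mulx; case: ifP; rewrite ?linear0. Qed.

Lemma eop_top_comm i j : GRing.comm (eop i) (top j).
Proof. by apply: endo_eqP => F a /=; rewrite /cl !DunklE linearZ. Qed.

Lemma eop_rop_comm i j : GRing.comm (eop i) (rop j).
Proof. by apply: endo_eqP => F a /=; rewrite /cl /refl linearZ. Qed.

Lemma eop_anti i j : i != j -> eop i * eop j = - (eop j * eop i).
Proof.
move=> ij; apply: endo_eqP => F a /=; rewrite /cl; apply/eqP.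
by rewrite -addr_eq0 e_clifford (negbTE ij) scale0r oppr0.
Qed.

Lemma clifford_sqr i v : e i (e i v) = - v.
Proof.
apply: (@scalerI _ _ (2 : R)); first by rewrite pnatr_eq0.
by rewrite scaler_nat mulr2n e_clifford eqxx scalerN.
Qed.

Lemma eop_sqr i : eop i * eop i = -1.
Proof. by apply: endo_eqP => F a /=; rewrite /cl clifford_sqr. Qed.

Lemma xA_apply A F : xA xop eop A F = XopA e A F.
Proof. by apply/funext => a; rewrite endo_sumE fct_sumE. Qed.

Lemma DA_apply A F : DA top eop A F = DopA mu e A F.
Proof. by apply/funext => a; rewrite endo_sumE fct_sumE. Qed.

Lemma reflA_apply A F : reflA A F = rprod rop (enum A) F.
Proof.
rewrite /reflA /rprod; elim: (enum A) => [|k s IHs] /=; first by rewrite big_nil.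
by rewrite big_cons IHs.
Qed.

Lemma Gam_apply A F :
  Gam mu e A F = 2^-1 *: Gamma2 xop top eop rop A F.
Proof.
rewrite /Gam /SopA reflA_apply /Gamma2 !fctE; apply/funext => a /=.
by rewrite -!DA_apply -!xA_apply.
Qed.

Lemma Gam2_apply A F a :
  Gam2 mu e A F a = 4^-1 *: ((Gamma2 xop top eop rop A ^+ 2) F a).
Proof.
by rewrite /Gam2 !Gam_apply linearZ scalerA -invfM -natrM.
Qed.

Theorem Gam2_identity (P : {set 'I_n}) i j F a : i != j -> i \notin P -> j \notin P ->
  Gam2 mu e [set i; j] F a + Gam2 mu e (j |: P) F a
  = Gam2 mu e (j |: (i |: P)) F a - Gam2 mu e (i |: P) F a + Gam2 mu e P F a
    + Gam2 mu e [set j] F a + Gam2 mu e [set i] F a - 4^-1 *: F a.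
Proof.
move=> ij iP jP; rewrite !Gam2_apply -!(scalerDr, scalerBr); congr (_ *: _).
have := Gamma2_sqr_identity xop_comm top_comm xop_top_comm eop_xop_comm eop_top_comm
  eop_anti eop_sqr rop_xop_anti rop_top_anti rop_xop_comm rop_top_comm rop_comm rop_sqr
  eop_rop_comm ij iP jP.
by move/(congr1 (fun f : endo W => f F a)).
Qed.

End DunklOperators.

Theorem lemma14 (R : realFieldType) (n : nat) (mu : 'I_n -> R)
  (V : lmodType R) (e : 'I_n -> {linear V -> V}) (l : nat)
  (hmu : forall i, 0 < mu i) (hcl : clifford_rel e)
  (hn : (3 <= n)%N) (hl1 : (1 <= l)%N) (hl2 : (l <= n - 2)%N)
  (F : elt n V) (hF : finsupp F) (a : mono n) :
  Gam2 mu e (sing1 n l.+1 :|: sing1 n l.+2) F a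
  + Gam2 mu e (setup n l.+2 :\: sing1 n l.+1) F a
  = Gam2 mu e (setup n l.+2) F a - Gam2 mu e (setup n l.+1) F a
    + Gam2 mu e (setup n l) F a + Gam2 mu e (sing1 n l.+2) F a
    + Gam2 mu e (sing1 n l.+1) F a - 4^-1 *: F a.
Proof.
(* The ordinals [i1] and [i2] are the paper's indices l+1 and l+2. *)
have lt_l_n : (l < n)%N by lia.
have lt_Sl_n : (l.+1 < n)%N by lia.
pose i1 : 'I_n := Ordinal lt_l_n; pose i2 : 'I_n := Ordinal lt_Sl_n.
pose P := setup n l.
have -> : setup n l.+2 :\: sing1 n l.+1 = i2 |: P.
  by apply/setP => -[k lt_k_n]; rewrite !inE -!val_eqE /=; apply/idP/idP; lia.
have -> : sing1 n l.+1 = [set i1] by apply/setP => k; rewrite !inE -val_eqE.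
have -> : sing1 n l.+2 = [set i2] by apply/setP => k; rewrite !inE -val_eqE.
have -> : setup n l.+1 = i1 |: P.
  by apply/setP => k; rewrite !inE -val_eqE /= ltnS leq_eqVlt.
have -> : setup n l.+2 = i2 |: (i1 |: P).
  by apply/setP => k; rewrite !inE -!val_eqE /= ltnS leq_eqVlt ltnS leq_eqVlt.
have i12 : i1 != i2 by rewrite -val_eqE /= neq_ltn ltnSn.
have i1P : i1 \notin P by rewrite inE ltnn.
have i2P : i2 \notin P by rewrite inE ltnNge leqnSn.
exact: Gam2_identity.
Qed.
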